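(* Let $g\colon[r]^d\to\{0,1\}$ be $k$-monotone and let $f=(-1)^{g}\colon[r]^d\to\{-1,1\}$. Then $\mathrm{Inf}[f]\leq k\sqrt{d}$.
   Context: $[r]^d$ is ordered coordinatewise; $g$ is $k$-monotone if there is no chain $x_1\preceq\cdots\preceq x_{k+1}$ with $g(x_1)=1$ and $g(x_i)\neq g(x_{i+1})$ for all $i\in[k]$. For $f\colon[r]^d\to\{-1,1\}$, $\mathrm{Inf}_i[f]=2\Pr[f(x)\neq f(x^{(i)})]$, where $x$ is uniform in $[r]^d$ and $x^{(i)}$ is obtained from $x$ by replacing $x_i$ with an independent uniform element of $[r]$; $\mathrm{Inf}[f]=\sum_{i=1}^d\mathrm{Inf}_i[f]$. *)

From HB Require Import structures.
From mathcomp Require Import all_boot all_order all_algebra.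
Set Implicit Arguments. Unset Strict Implicit. Unset Printing Implicit Defensive.
Import Order.TTheory GRing.Theory Num.Theory.
Local Open Scope ring_scope.

(* [r]^d, with [r] represented as 'I_r = {0,...,r-1} (order-isomorphic to {1,...,r}) *)
Definition point (d r : nat) := {ffun 'I_d -> 'I_r}.

Definition pleq (d r : nat) (x y : point d r) : bool := [forall i, (x i <= y i)%N].

(* g : [r]^d -> {0,1} encoded as bool (true = 1).
   k-monotone: no chain c 0 <= c 1 <= ... <= c k (i.e. x_1,...,x_{k+1})
   with g (c 0) = 1 and g (c i) <> g (c (i+1)) for all i < k. *)
Definition k_monotone (d r k : nat) (g : point d r -> bool) : Prop :=
  ~ exists c : nat -> point d r,
      (forall i, (i < k)%N -> pleq (c i) (c i.+1)) /\
      g (c 0%N) = true /\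
      (forall i, (i < k)%N -> g (c i) != g (c i.+1)).

Definition upd (d r : nat) (x : point d r) (i : 'I_d) (a : 'I_r) : point d r :=
  [ffun j => if j == i then a else x j].

Definition infl_i (R : numFieldType) (d r : nat) (f : point d r -> int) (i : 'I_d) : R :=
  2 * ((#|[set p : point d r * 'I_r | f p.1 != f (upd p.1 i p.2)]|)%:R
       / (#|{: point d r}| * r)%:R).

Definition infl (R : numFieldType) (d r : nat) (f : point d r -> int) : R :=
  \sum_(i < d) infl_i R f i.

Definition pm_of (d r : nat) (g : point d r -> bool) : point d r -> int :=
  fun x => (-1) ^+ (g x : nat).

From HB Require Import structures.
From mathcomp Require Import all_boot all_order all_algebra.
From mathcomp Require Import ring lra zify.
Import Order.TTheory GRing.Theory Num.Theory.
Local Open Scope ring_scope.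
Set Implicit Arguments. Unset Strict Implicit. Unset Printing Implicit Defensive.

(* Let H_j(x) say that some alternating chain x_0 <= ... <= x_j <= x with
   g(x_0) = 1 ends below x.  The H_j are monotone, H_k is empty because g is
   k-monotone, and g is the parity of H_0 + ... + H_(k-1); so whenever g
   changes some H_j changes, and it suffices to show Inf[(-1)^h] <= sqrt d for
   monotone h.
   For monotone h, exchanging x_i with a fresh uniform coordinate gives
   Inf[(-1)^h] = 4 / (r^d r) * sum_x h(x) U(x), with the centered rank
   U(x) = sum_i (2 x_i - (r - 1)), and since sum_x U(x) = 0 this is at most
   2 / (r^d r) * sum_x |U(x)|.
   Call w nonnegative-centered if its sum over every centered progression
   -L, -L + 2, ..., L is nonnegative.  Convolving with a further centered
   progression preserves this property, and U is a sum of d independent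
   centered progressions, so sum_x w(U(x)) >= 0.  For the weight
   lambda^2 + 1 + 3 s^2 - 4 lambda |s| with lambda = r sqrt d, together with
   sum_x U(x)^2 = r^d d (r^2 - 1) / 3, this yields sum_x |U(x)| <= r^d r sqrt d / 2. *)

Section CenteredSum.
Variable R : realFieldType.
Implicit Types (w : R -> R) (L : nat).

Definition centered_sum w L : R := \sum_(i < L.+1) w (2 * i%:R - L%:R).

Definition nonneg_centered w := forall L, 0 <= centered_sum w L.

Lemma centered_sum0 w : centered_sum w 0 = w 0.
Proof. by rewrite /centered_sum big_ord1 mulr0 subr0. Qed.

Lemma centered_sumSS w L :
  centered_sum w L.+2 = w (- L.+2%:R) + centered_sum w L + w L.+2%:R.
Proof.
rewrite /centered_sum big_ord_recl big_ord_recr /= mulr0 sub0r addrA.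
congr (_ + _ + _); last by congr w; rewrite -!natr1; ring.
by apply: eq_bigr => i _; congr w; rewrite /bump /= add1n -!natr1; ring.
Qed.

Lemma centered_sumN w L : centered_sum (fun s => w (- s)) L = centered_sum w L.
Proof.
rewrite /centered_sum (reindex_inj rev_ord_inj) /=; apply: eq_bigr => i _.
by congr w; rewrite subSS natrB -1?ltnS // -!natr1; ring.
Qed.

Lemma centered_sum_id L : centered_sum id L = 0.
Proof.
apply/eqP; rewrite -[_ == 0](mulrn_eq0 _ 2) mulr2n.
by rewrite -{1}centered_sumN /centered_sum -big_split big1 // => i _; rewrite /= addNr.
Qed.

Lemma centered_sum_sqr L :
  centered_sum (fun s => s ^+ 2) L = L%:R * L.+1%:R * L.+2%:R / 3.
Proof.
elim/ltn_ind: L => -[|[|L]] IH.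
- by rewrite centered_sum0 expr0n !mul0r.
- by rewrite /centered_sum !big_ord_recr big_ord0 /=; field.
- by rewrite centered_sumSS IH // sqrrN -!natr1; field.
Qed.

Lemma centered_sum_shift_sqr a L :
  centered_sum (fun s => (a + s) ^+ 2) L =
  L.+1%:R * a ^+ 2 + centered_sum (fun s => s ^+ 2) L.
Proof.
transitivity (centered_sum (fun s => a ^+ 2 + 2 * a * s + s ^+ 2) L).
  by apply: eq_bigr => i _; ring.
rewrite /centered_sum !big_split /= sumr_const card_ord -(mulr_sumr _ _ _ (2 * a)).
have := centered_sum_id L; rewrite /centered_sum /= => ->.
by rewrite mulr0 addr0 mulr_natl.
Qed.

Lemma centered_sum_norm L : centered_sum Num.norm L <= L.+1%:R ^+ 2 / 2.
Proof.
elim/ltn_ind: L => -[|[|L]] IH.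
- by rewrite centered_sum0 normr0 divr_ge0 ?sqr_ge0.
- rewrite /centered_sum !big_ord_recr big_ord0 /= mulr0 mulr1 sub0r normrN.
  have -> : 2 - 1 = 1 :> R by lra.
  by rewrite normr1 expr2; lra.
- have := IH L (ltnW (ltnSn _)); rewrite centered_sumSS normrN ger0_norm ?ler0n //.
  have -> : L.+3%:R ^+ 2 / 2 = L.+1%:R ^+ 2 / 2 + 2 * L.+2%:R :> R.
    by rewrite -!natr1; field.
  lra.
Qed.

Lemma nonneg_centered_quadratic lambda : 0 <= lambda ->
  nonneg_centered (fun s => lambda ^+ 2 + 1 + 3 * s ^+ 2 - 4 * lambda * `|s|).
Proof.
move=> lambda_ge0 L.
have -> : centered_sum (fun s => lambda ^+ 2 + 1 + 3 * s ^+ 2 - 4 * lambda * `|s|) L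
    = L.+1%:R * (lambda ^+ 2 + 1) + 3 * centered_sum (fun s => s ^+ 2) L
      - 4 * lambda * centered_sum Num.norm L.
  by rewrite /centered_sum sumrB big_split sumr_const card_ord -!mulr_sumr !mulr_natl.
rewrite centered_sum_sqr.
have -> : L.+1%:R * (lambda ^+ 2 + 1) + 3 * (L%:R * L.+1%:R * L.+2%:R / 3)
    - 4 * lambda * centered_sum Num.norm L
  = L.+1%:R * (lambda - L.+1%:R) ^+ 2
    + 4 * lambda * (L.+1%:R ^+ 2 / 2 - centered_sum Num.norm L).
  by rewrite -!natr1; field.
apply: addr_ge0; first by rewrite mulr_ge0 ?sqr_ge0.
by rewrite mulr_ge0 ?mulr_ge0 ?subr_ge0 ?centered_sum_norm.
Qed.

(* The (B + 2) x (A + 2) grid of pairs (i, t) minus the grid for (B, A) is the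
   hook {i = 0} U {t = A + 1}, on which 2i - (B + 1) + 2t - (A + 1) runs through
   the centered progression of length A + B + 3. *)
Lemma centered_sum_shiftSS w A B :
  centered_sum (fun s => centered_sum (fun t => w (s + t)) A.+1) B.+1 =
  centered_sum w (A + B).+2 + centered_sum (fun s => centered_sum (fun t => w (s + t)) A) B.
Proof.
rewrite [LHS]/centered_sum big_ord_recl [centered_sum w _]/centered_sum.
rewrite (_ : (A + B).+3 = A.+2 + B.+1)%N; last by lia.
rewrite big_split_ord -addrA; congr (_ + _).
  by apply: eq_bigr => t _; congr w; rewrite /= ?natrD -!natr1 ?natrD; ring.
rewrite addrC -big_split /=; apply: eq_bigr => i _.
rewrite /centered_sum big_ord_recr /=; congr (_ + _).
  by apply: eq_bigr => t _; congr w; rewrite /bump /= ?natrD -!natr1 ?natrD; ring.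
by congr w; rewrite /bump /= ?natrD -!natr1 ?natrD; ring.
Qed.

Lemma nonneg_centered_shift w A : nonneg_centered w ->
  nonneg_centered (fun s => centered_sum (fun t => w (s + t)) A).
Proof.
move=> w_ge0; elim: A => [|A IH] B.
  rewrite (_ : centered_sum _ B = centered_sum w B) //.
  by apply: eq_bigr => i _; rewrite centered_sum0 addr0.
case: B => [|B]; last by rewrite centered_sum_shiftSS addr_ge0.
rewrite centered_sum0 (_ : centered_sum _ A.+1 = centered_sum w A.+1) //.
by apply: eq_bigr => i _; rewrite add0r.
Qed.

End CenteredSum.

Section ConsPoint.
Variable r : nat.

Definition cons_point d (t : 'I_r) (y : point d r) : point d.+1 r :=
  [ffun j => if unlift ord0 j is Some j' then y j' else t].

Lemma cons_point_bij d : bijective (fun p : 'I_r * point d r => cons_point p.1 p.2).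
Proof.
exists (fun x : point d.+1 r => (x ord0, [ffun j => x (lift ord0 j)])).
  move=> [t y] /=; congr (_, _); first by rewrite ffunE unlift_none.
  by apply/ffunP => j; rewrite !ffunE liftK.
move=> x; apply/ffunP => j; rewrite ffunE.
by case: unliftP => [j' -> | ->] /=; rewrite ?ffunE.
Qed.

Lemma big_point_cons (R : nmodType) d (F : point d.+1 r -> R) :
  \sum_x F x = \sum_t \sum_(y : point d r) F (cons_point t y).
Proof.
rewrite pair_bigA (reindex _ (onW_bij _ (cons_point_bij d))) /=.
by apply: eq_bigr => -[].
Qed.

End ConsPoint.

Lemma card_point d r : #|{: point d r}| = (r ^ d)%N.
Proof. by rewrite card_ffun !card_ord. Qed.

Section CenteredRank.
Variable R : realFieldType.

Definition centered_rank d r (x : point d r) : R := \sum_i (2 * (x i)%:R - r.-1%:R).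

Lemma centered_rank_cons d r t (y : point d r) :
  centered_rank (cons_point t y) = centered_rank y + (2 * t%:R - r.-1%:R).
Proof.
rewrite /centered_rank big_ord_recl ffunE unlift_none addrC; congr (_ + _).
by apply: eq_bigr => j _; rewrite ffunE liftK.
Qed.

Variable n : nat.
Local Notation r := n.+1.

Lemma sum_point0 (F : point 0 r -> R) x : \sum_(y : point 0 r) F y = F x.
Proof. by rewrite (big_pred1 x) // => y; apply/esym/eqP/ffunP => -[]. Qed.

Lemma sum_centered_rank_cons d (F : R -> R) :
  \sum_(x : point d.+1 r) F (centered_rank x) =
  \sum_(y : point d r) centered_sum (fun s => F (centered_rank y + s)) n.
Proof.
rewrite big_point_cons exchange_big; apply: eq_bigr => y _.
by apply: eq_bigr => t _; rewrite centered_rank_cons.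
Qed.

Lemma sum_centered_rank_ge0 d w : nonneg_centered w ->
  0 <= \sum_(x : point d r) w (centered_rank x).
Proof.
elim: d w => [|d IH] w w_ge0.
  rewrite (sum_point0 _ [ffun=> ord0]) /centered_rank big_ord0.
  by have := w_ge0 0%N; rewrite centered_sum0.
rewrite sum_centered_rank_cons.
exact: (IH (fun s => centered_sum (fun t => w (s + t)) n) (nonneg_centered_shift n w_ge0)).
Qed.

Lemma sum_centered_rank d : \sum_(x : point d r) centered_rank x = 0.
Proof.
have id_ge0 : nonneg_centered (@id R) by move=> L; rewrite centered_sum_id.
have opp_ge0 : nonneg_centered (fun s : R => - s).
  by move=> L; rewrite (centered_sumN id) centered_sum_id.
apply/eqP; rewrite eq_le -oppr_ge0 -sumrN.
by rewrite (sum_centered_rank_ge0 _ id_ge0) (sum_centered_rank_ge0 _ opp_ge0).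
Qed.

Lemma sum_centered_rank_sqr d :
  \sum_(x : point d r) centered_rank x ^+ 2 =
  #|{: point d r}|%:R * d%:R * (r%:R ^+ 2 - 1) / 3.
Proof.
elim: d => [|d IH].
  by rewrite (sum_point0 _ [ffun=> ord0]) /centered_rank big_ord0 expr0n /= !mulr0 !mul0r.
rewrite (sum_centered_rank_cons d (fun s => s ^+ 2)).
under eq_bigr do rewrite centered_sum_shift_sqr.
rewrite big_split /= -mulr_sumr IH sumr_const !card_point centered_sum_sqr.
rewrite natrX -[_ *+ (r ^ d)]mulr_natr !natrX [r%:R ^+ d.+1]exprS.
by set N := r%:R ^+ d; rewrite -!natr1; field.
Qed.

End CenteredRank.

Lemma sum_norm_centered_rank_le (R : rcfType) n d :
  2 * \sum_(x : point d n.+1) `|centered_rank R x| <=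
  #|{: point d n.+1}|%:R * n.+1%:R * Num.sqrt d%:R.
Proof.
case: d => [|d].
  rewrite big1 ?mulr0 ?mulr_ge0 ?sqrtr_ge0 // => x _.
  by rewrite /centered_rank big_ord0 normr0.
set N := #|{: point d.+1 n.+1}|%:R; set s := Num.sqrt d.+1%:R; set rho : R := n.+1%:R.
have N_gt0 : 0 < N by rewrite /N card_point ltr0n expn_gt0.
have s_gt0 : 0 < s by rewrite sqrtr_gt0 ltr0n.
have s_sqr : s ^+ 2 = d.+1%:R by rewrite sqr_sqrtr ?ler0n.
have rho_gt0 : 0 < rho by rewrite ltr0n.
have lambda_ge0 : 0 <= rho * s by rewrite mulr_ge0 ?ltW.
have := sum_centered_rank_ge0 n d.+1 (nonneg_centered_quadratic lambda_ge0).
rewrite sumrB big_split /= sumr_const -[_ *+ #|_|]mulr_natl -!mulr_sumr.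
rewrite sum_centered_rank_sqr -/N -s_sqr -/rho; set S := \sum_x _ => S_bound.
have N_s_ge0 : 0 <= N * (s ^+ 2 - 1).
  by apply: mulr_ge0; [exact: ltW | rewrite subr_ge0 s_sqr ler1n].
have : 2 * (rho * s) * (2 * S) <= 2 * (rho * s) * (N * rho * s) by lra.
by rewrite ler_pM2l ?mulr_gt0.
Qed.

Lemma natr_card_set (R : pzSemiRingType) (T : finType) (P : pred T) :
  #|[set x | P x]|%:R = \sum_x (P x)%:R :> R.
Proof.
rewrite -sum1dep_card natr_sum big_mkcond /=.
by apply: eq_bigr => x _; case: (P x).
Qed.

Lemma sum_pairE (R : nmodType) (T1 T2 : finType) (F : T1 * T2 -> R) :
  \sum_p F p = \sum_x \sum_y F (x, y).
Proof. by rewrite pair_bigA; apply: eq_bigr => -[]. Qed.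

Lemma sum_ord_ltn (R : pzSemiRingType) r m :
  \sum_(a < r) (a < m)%N%:R = (minn m r)%:R :> R.
Proof.
elim: r => [|r IH]; first by rewrite big_ord0 minn0.
by rewrite big_ord_recr /= IH -natrD; congr _%:R; case: ltnP; lia.
Qed.

Lemma sum_ord_sign (R : pzRingType) r t : (t < r)%N ->
  \sum_(a < r) ((a < t)%N%:R - (t < a)%N%:R) = 2 * t%:R - r.-1%:R :> R.
Proof.
move=> t_lt_r; rewrite sumrB sum_ord_ltn (reindex_inj rev_ord_inj) /=.
rewrite (eq_bigr (fun a : 'I_r => (a < r - t.+1)%N%:R)); last first.
  move=> a _; rewrite /= (_ : (t < r - a.+1)%N = (a < r - t.+1)%N) //.
  by apply/idP/idP; have := ltn_ord a; lia.
rewrite sum_ord_ltn (minn_idPl (ltnW t_lt_r)) (minn_idPl (leq_subr _ _)).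
rewrite (_ : (r - t.+1 = r.-1 - t)%N); last by lia.
by rewrite natrB ?opprB ?addrA -?mulr2n ?mulr_natl //; lia.
Qed.

Section Update.
Variables d r : nat.
Implicit Types (x : point d r) (i : 'I_d) (a b : 'I_r).

Lemma upd_same x i a : upd x i a i = a.
Proof. by rewrite ffunE eqxx. Qed.

Lemma upd_upd x i a b : upd (upd x i a) i b = upd x i b.
Proof. by apply/ffunP => j; rewrite !ffunE; case: eqP. Qed.

Lemma upd_id x i : upd x i (x i) = x.
Proof. by apply/ffunP => j; rewrite ffunE; case: eqP => [->|]. Qed.

Lemma pleq_upd x i a : (x i <= a)%N -> pleq x (upd x i a).
Proof. by move=> le_xa; apply/forallP => j; rewrite ffunE; case: eqP => [->|]. Qed.

Lemma upd_pleq x i a : (a <= x i)%N -> pleq (upd x i a) x.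
Proof. by move=> le_ax; apply/forallP => j; rewrite ffunE; case: eqP => [->|]. Qed.

Definition swap_upd i (p : point d r * 'I_r) := (upd p.1 i p.2, p.1 i).

Lemma swap_updK i : involutive (swap_upd i).
Proof. by case=> x a; rewrite /swap_upd /= upd_upd upd_id upd_same. Qed.

End Update.

Definition monotone d r (h : point d r -> bool) := forall x y, pleq x y -> h x -> h y.

Section MonotoneInfluence.
Variable R : pzRingType.
Variables d r : nat.
Implicit Types (h : point d r -> bool).

Lemma monotone_neqE h x y : monotone h -> pleq x y ->
  (h x != h y)%:R = (h y)%:R - (h x)%:R :> R.
Proof.
move=> h_mono /h_mono; case: (h x); case: (h y) => /= mono;
  by rewrite ?mulr1n ?mulr0n ?subrr ?subr0 //; have := mono isT.
Qed.

(* The indicator of a change is (h x' - h x) times the sign of a - x_i, and the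
   involution swap_upd exchanges the two terms of this difference. *)
Lemma card_upd_neq h i : monotone h ->
  #|[set p : point d r * 'I_r | h p.1 != h (upd p.1 i p.2)]|%:R =
  2 * \sum_x (h x)%:R * (2 * (x i)%:R - r.-1%:R) :> R.
Proof.
move=> h_mono; rewrite natr_card_set.
pose sgn (p : point d r * 'I_r) : R := (p.1 i < p.2)%N%:R - (p.2 < p.1 i)%N%:R.
have neq_sgn p :
    (h p.1 != h (upd p.1 i p.2))%:R = ((h (upd p.1 i p.2))%:R - (h p.1)%:R) * sgn p.
  case: p => x a; rewrite /sgn /=.
  case: (ltngtP (x i) a) => [lt_xa | lt_ax | eq_xa]; rewrite /= ?mulr1n ?mulr0n.
  - by rewrite subr0 mulr1 (monotone_neqE h_mono (pleq_upd (ltnW lt_xa))).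
  - rewrite sub0r mulrN1 opprB eq_sym.
    by rewrite (monotone_neqE h_mono (upd_pleq (ltnW lt_ax))).
  - by rewrite (_ : a = x i) ?upd_id ?eqxx ?subrr ?mulr0 //; apply: val_inj.
have swap_sum : \sum_p (h (upd p.1 i p.2))%:R * sgn p = - \sum_p (h p.1)%:R * sgn p.
  rewrite (reindex_inj (inv_inj (swap_updK i))) -sumrN.
  apply: eq_bigr => -[x a] _; rewrite /sgn /= upd_same upd_upd upd_id.
  by rewrite -mulrN opprB.
have sum_sgn :
    \sum_p (h p.1)%:R * sgn p = - \sum_x (h x)%:R * (2 * (x i)%:R - r.-1%:R).
  rewrite sum_pairE -sumrN; apply: eq_bigr => x _.
  rewrite /sgn /= -mulr_sumr -mulrN -sum_ord_sign // -sumrN.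
  by congr (_ * _); apply: eq_bigr => a _; rewrite opprB.
rewrite (eq_bigr _ (fun p _ => neq_sgn p)) /=.
under eq_bigr do rewrite mulrBl.
by rewrite sumrB swap_sum sum_sgn opprK mulr_natl mulr2n.
Qed.

End MonotoneInfluence.

Lemma pm_of_neq d r (h : point d r -> bool) x y :
  (pm_of h x != pm_of h y) = (h x != h y).
Proof. by rewrite /pm_of; case: (h x); case: (h y). Qed.

Lemma infl_monotone_le_sqrt (R : rcfType) d r (h : point d r -> bool) :
  monotone h -> infl R (pm_of h) <= Num.sqrt d%:R.
Proof.
(* for r = 0 every infl_i divides by 0 and is therefore 0 *)
case: r h => [|n] h h_mono.
  by rewrite /infl big1 ?sqrtr_ge0 // => i _; rewrite /infl_i muln0 invr0 !mulr0.
set D : R := (#|{: point d n.+1}| * n.+1)%:R.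
have D_gt0 : 0 < D by rewrite ltr0n muln_gt0 card_point expn_gt0.
have infl_E : infl R (pm_of h) = 4 / D * \sum_x (h x)%:R * centered_rank R x.
  rewrite /centered_rank; under eq_bigr do rewrite mulr_sumr.
  rewrite exchange_big mulr_sumr; apply: eq_bigr => i _.
  rewrite /infl_i (eq_card (B := [set p | h p.1 != h (upd p.1 i p.2)])); last first.
    by move=> p; rewrite !inE pm_of_neq.
  by rewrite card_upd_neq // -/D; ring.
have half_bound : 2 * \sum_x (h x)%:R * centered_rank R x <=
    \sum_(x : point d n.+1) `|centered_rank R x|.
  rewrite (_ : \sum_x `|_| =
      \sum_(x : point d n.+1) (`|centered_rank R x| + centered_rank R x)); last first.
    by rewrite big_split /= sum_centered_rank addr0.
  rewrite mulr_sumr; apply: ler_sum => x _.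
  have := ler_norm (centered_rank R x); have := ler_norm (- centered_rank R x).
  by rewrite normrN; case: (h x); rewrite /= ?mulr1n ?mulr0n ?mul1r ?mul0r; lra.
have := sum_norm_centered_rank_le R n d => norm_bound.
by rewrite infl_E mulrAC ler_pdivrMr // /D natrM; lra.
Qed.

Lemma pleq_refl d r (x : point d r) : pleq x x.
Proof. exact/forallP. Qed.

Lemma pleq_trans d r (x y z : point d r) : pleq x y -> pleq y z -> pleq x z.
Proof. by move=> /forallP le_xy /forallP le_yz; apply/forallP => i; apply: leq_trans. Qed.

Section AlternatingChains.
Variables (d r : nat) (g : point d r -> bool).
Implicit Types (x y z : point d r).

Fixpoint alt_end j y : bool :=
  if j is j'.+1 then [exists z, [&& pleq z y, alt_end j' z & g z != g y]] else g y.

Definition alt_above j x := [exists y, pleq y x && alt_end j y].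

Lemma alt_end_parity j y : alt_end j y -> g y = ~~ odd j.
Proof.
elim: j y => [|j IH] y //= /existsP [z /and3P [_ /IH gz]].
by rewrite gz; case: (g y); case: (odd j).
Qed.

Lemma alt_end_chain j y : alt_end j y -> exists c : nat -> point d r,
  [/\ c j = y, forall i, (i < j)%N -> pleq (c i) (c i.+1), g (c 0%N) &
      forall i, (i < j)%N -> g (c i) != g (c i.+1)].
Proof.
elim: j y => [|j IH] y /=; first by exists (fun=> y).
case/existsP=> z /and3P [le_zy /IH [c [cj c_le c0 c_alt]] gzy].
exists (fun i => if i == j.+1 then y else c i); split=> //; first by rewrite eqxx.
  move=> i lt_ij1; rewrite eqSS (ltn_eqF lt_ij1).
  case: (eqVneq i j) => [-> | ne_ij]; first by rewrite cj.
  by rewrite c_le // ltn_neqAle ne_ij -ltnS.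
move=> i lt_ij1; rewrite eqSS (ltn_eqF lt_ij1).
case: (eqVneq i j) => [-> | ne_ij]; first by rewrite cj.
by rewrite c_alt // ltn_neqAle ne_ij -ltnS.
Qed.

Lemma alt_above_k k x : k_monotone k g -> ~~ alt_above k x.
Proof.
move=> g_kmono; apply/existsP => -[y /andP [_ /alt_end_chain [c [_ c_le c0 c_alt]]]].
by apply: g_kmono; exists c.
Qed.

Lemma alt_above_monotone j : monotone (alt_above j).
Proof.
move=> x y le_xy /existsP [z /andP [le_zx alt_z]]; apply/existsP; exists z.
by rewrite alt_z (pleq_trans le_zx le_xy).
Qed.

Lemma alt_aboveS j x : alt_above j.+1 x -> alt_above j x.
Proof.
case/existsP=> y /andP [le_yx /existsP [z /and3P [le_zy alt_z _]]].
by apply/existsP; exists z; rewrite (pleq_trans le_zy le_yx).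
Qed.

Lemma alt_aboveW i j x : (i <= j)%N -> alt_above j x -> alt_above i x.
Proof.
move/subnK <-; elim: (j - i)%N => // m IH.
by rewrite addSn => /alt_aboveS.
Qed.

Lemma parity_alt_above n x :
  ~~ alt_above n x -> g x = odd (\sum_(j < n) alt_above j x).
Proof.
elim: n => [|n IH] not_above.
  rewrite big_ord0; apply: contraNF not_above => gx.
  by apply/existsP; exists x; rewrite pleq_refl.
rewrite big_ord_recr /=.
have [above_n | /IH -> //] := boolP (alt_above n x); last by rewrite addn0.
rewrite (eq_bigr (fun=> 1%N)) => [|j _]; last first.
  by rewrite (alt_aboveW (ltnW (ltn_ord j)) above_n).
rewrite sum1_card card_ord addn1 /=.
case/existsP: above_n => y /andP [le_yx alt_y]; rewrite -(alt_end_parity alt_y).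
apply: contraNeq not_above => gyx; apply/existsP; exists x; rewrite pleq_refl /=.
by apply/existsP; exists y; rewrite le_yx alt_y eq_sym.
Qed.

Lemma alt_above_sep k x y : k_monotone k g -> g x != g y ->
  exists j : 'I_k, alt_above j x != alt_above j y.
Proof.
move=> g_kmono; rewrite !(parity_alt_above (alt_above_k _ g_kmono)) => neq_parity.
apply/existsP; apply: contraNT neq_parity => /existsPn all_eq.
by apply/eqP; congr odd; apply: eq_bigr => j _; move/negPn/eqP: (all_eq j) => ->.
Qed.

End AlternatingChains.

Lemma infl_i_le_sum (R : numFieldType) d r k (f : point d r -> int)
    (fs : 'I_k -> point d r -> int) i :
  (forall x y, f x != f y -> exists j, fs j x != fs j y) ->
  infl_i R f i <= \sum_j infl_i R (fs j) i.
Proof.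
move=> f_sep; rewrite /infl_i -mulr_sumr -mulr_suml.
rewrite ler_wpM2l // ler_wpM2r ?invr_ge0 // natr_card_set.
rewrite (eq_bigr (fun j => \sum_p (fs j p.1 != fs j (upd p.1 i p.2))%:R)); last first.
  by move=> j _; rewrite natr_card_set.
rewrite exchange_big /=; apply: ler_sum => p _.
case: (boolP (f _ != _)) => [/f_sep [j neq_j] | _]; last by rewrite sumr_ge0.
by rewrite (bigD1 j) //= neq_j lerDl sumr_ge0.
Qed.

Lemma infl_le_sum (R : numFieldType) d r k (f : point d r -> int)
    (fs : 'I_k -> point d r -> int) :
  (forall x y, f x != f y -> exists j, fs j x != fs j y) ->
  infl R f <= \sum_j infl R (fs j).
Proof.
move=> f_sep; rewrite /infl exchange_big /=.
by apply: ler_sum => i _; apply: infl_i_le_sum.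
Qed.

Unset Implicit Arguments.
Theorem lemma6p6 (R : rcfType) (d r k : nat) (g : point d r -> bool) :
  k_monotone k g ->
  infl R (pm_of g) <= k%:R * Num.sqrt (d%:R : R).
Proof.
move=> g_kmono.
have g_sep x y : pm_of g x != pm_of g y ->
    exists j : 'I_k, pm_of (alt_above g j) x != pm_of (alt_above g j) y.
  by rewrite pm_of_neq => /(alt_above_sep g_kmono) [j neq_j]; exists j; rewrite pm_of_neq.
apply: le_trans (infl_le_sum R (fs := fun j : 'I_k => pm_of (alt_above g j)) g_sep) _.
rewrite -[k in k%:R]card_ord mulr_natl -sumr_const.
by apply: ler_sum => j _; apply/infl_monotone_le_sqrt/alt_above_monotone.
Qed.
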